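(* Let $\mathcal{M}=\langle M,\circ,e\rangle$ be an effective mge monoid with computable mge function $\eta$, let $\mathcal{T}$ be a monoidal finite-state transducer with output in $\mathcal{M}$, and let $\mathcal{A}^2$ be a (finitely given) squared output automaton for $\mathcal{T}$. Then a valuation $\langle\rho,\nu\rangle$ of $\mathcal{A}^2$ can be effectively computed.
   Context: An mge monoid is a monoid with right cancellation ($ac=bc\Rightarrow a=b$) in which every equalizable pair has a most general equalizer; here a tuple $\langle m_1,\dots,m_n\rangle$ is equalizable if some $\langle x_1,\dots,x_n\rangle$ (an equalizer) satisfies $m_1x_1=\dots=m_nx_n$, and an equalizer is most general (an mge) if every equalizer has the form $\langle x_1x,\dots,x_nx\rangle$ for some $x\in M$. It is effective if elements are represented as a recursive subset of $\mathbb{N}$ with computable operation, equality is decidable, equalizability of pairs is decidable, a computable $\eta:M^2\to M^2$ returns an mge for every equalizable pair, and inverses of invertible elements are computable. A transducer $\mathcal{T}=\langle\Sigma^*\times\mathcal{M},Q,I,F,\Delta\rangle$ has finite $\Delta\subseteq Q\times((\Sigma\cup\{\varepsilon\})\times M)\times Q$; $\Delta^*$ denotes generalized transitions (labels of paths, products of transition labels, including empty paths labelled by the unit). A squared output automaton for $\mathcal{T}$ is a monoidal automaton $\mathcal{A}^2=\langle\mathcal{M}\times\mathcal{M},Q\times Q,I\times I,F\times F,\Delta_2\rangle$ with finite $\Delta_2$ such that $\langle\langle p_1,p_2\rangle,\langle m,n\rangle,\langle q_1,q_2\rangle\rangle\in\Delta_2^*$ iff $\exists u\in\Sigma^*$ with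 $\langle p_1,\langle u,m\rangle,q_1\rangle,\langle p_2,\langle u,n\rangle,q_2\rangle\in\Delta^*$. A pair $\langle m_1,m_2\rangle$ is a relevant pair for a state $\langle q_1,q_2\rangle$ of $\mathcal{A}^2$ if $\langle q_1,q_2\rangle$ lies on a successful path of $\mathcal{A}^2$ (a path from $I\times I$ to $F\times F$) and $\langle\langle i_1,i_2\rangle,\langle m_1,m_2\rangle,\langle q_1,q_2\rangle\rangle\in\Delta_2^*$ for some $\langle i_1,i_2\rangle\in I\times I$. A valuation is a pair of partial functions $\rho,\nu:Q^2\to M^2$ such that: $\rho(q)$ is defined iff $q$ has a relevant pair; if defined, $\rho(q)=\langle e,e\rangle$ when $q\in I^2$ and otherwise $\rho(q)$ is some relevant pair of $q$; $\nu(q)=\langle e,e\rangle$ if $\rho(q)=\langle m,m\rangle$ for some $m$; otherwise $\nu(q)=\eta(\rho(q))$ if $\rho(q)$ is defined and equalizable, and $\nu(q)$ is undefined otherwise. *)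

From mathcomp Require Import all_boot.
Set Implicit Arguments. Unset Strict Implicit. Unset Printing Implicit Defensive.

(* Model of computation: mu-recursive functions on nat.                *)
Inductive prog : Type :=
| PZero
| PSucc
| PProj of nat
| PComp of prog & seq prog
| PRec of prog & prog
| PMin of prog.

Inductive eval : prog -> seq nat -> nat -> Prop :=
| eZero xs : eval PZero xs 0
| eSucc x xs : eval PSucc (x :: xs) x.+1
| eProj i xs : i < size xs -> eval (PProj i) xs (nth 0 xs i)
| eComp f gs xs ys y : evals gs xs ys -> eval f ys y -> eval (PComp f gs) xs y
| eRec0 f g xs y : eval f xs y -> eval (PRec f g) (0 :: xs) y
| eRecS f g n xs r y :
    eval (PRec f g) (n :: xs) r -> eval g (n :: r :: xs) y ->
    eval (PRec f g) (n.+1 :: xs) y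
| eMin f xs n :
    eval f (n :: xs) 0 -> (forall m, m < n -> exists k, eval f (m :: xs) k.+1) ->
    eval (PMin f) xs n
with evals : seq prog -> seq nat -> seq nat -> Prop :=
| esNil xs : evals [::] xs [::]
| esCons g gs xs y ys : eval g xs y -> evals gs xs ys -> evals (g :: gs) xs (y :: ys).

(* Goedel coding of finite sequences of naturals (a bijection seq nat -> nat) *)
Definition cd (s : seq nat) : nat := CodeSeq.code s.
Definition cd_pair (p : nat * nat) : nat := cd [:: p.1; p.2].
Definition cd_opt_pair (o : option (nat * nat)) : nat :=
  if o is Some p then (cd_pair p).+1 else 0.
Definition bool_nat (b : bool) : nat := if b then 1 else 0.

(* Monoids whose elements are a recursive subset of N.                  *)
(* Equality of elements is equality of their (unique) codes.            *)
Record nmonoid := NMonoid { Mdom : pred nat; mop : nat -> nat -> nat; me : nat }.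

Definition is_monoid (M : nmonoid) : Prop :=
  [/\ Mdom M (me M),
      (forall a b, Mdom M a -> Mdom M b -> Mdom M (mop M a b)),
      (forall a b c, Mdom M a -> Mdom M b -> Mdom M c ->
         mop M a (mop M b c) = mop M (mop M a b) c),
      (forall a, Mdom M a -> mop M (me M) a = a) &
      (forall a, Mdom M a -> mop M a (me M) = a)].

Definition right_cancellative (M : nmonoid) : Prop :=
  forall a b c, Mdom M a -> Mdom M b -> Mdom M c -> mop M a c = mop M b c -> a = b.

Definition equalizer (M : nmonoid) (m x : nat * nat) : Prop :=
  [/\ Mdom M x.1, Mdom M x.2 & mop M m.1 x.1 = mop M m.2 x.2].

Definition equalizable (M : nmonoid) (m : nat * nat) : Prop :=
  exists x, equalizer M m x.

Definition mge (M : nmonoid) (m x : nat * nat) : Prop :=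
  equalizer M m x /\
  forall y, equalizer M m y ->
    exists z, [/\ Mdom M z, y.1 = mop M x.1 z & y.2 = mop M x.2 z].

Definition mge_monoid (M : nmonoid) : Prop :=
  [/\ is_monoid M, right_cancellative M &
      forall m, Mdom M m.1 -> Mdom M m.2 -> equalizable M m -> exists x, mge M m x].

Definition invertible (M : nmonoid) (x : nat) : Prop :=
  exists y, [/\ Mdom M y, mop M x y = me M & mop M y x = me M].

(* effective mge monoid with computable mge function eta
   (equality is decidable since it is equality of natural numbers) *)
Definition effective_mge_monoid (M : nmonoid) (eta : nat * nat -> nat * nat) : Prop :=
  mge_monoid M /\
      (forall m, Mdom M m.1 -> Mdom M m.2 ->
         [/\ Mdom M (eta m).1, Mdom M (eta m).2 & equalizable M m -> mge M m (eta m)]) /\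
      (exists p, forall x, eval p [:: x] (bool_nat (Mdom M x))) /\
      (exists p, forall a b, Mdom M a -> Mdom M b -> eval p [:: a; b] (mop M a b)) /\
      (exists p, exists d : nat -> nat -> bool,
         (forall a b, Mdom M a -> Mdom M b -> (d a b <-> equalizable M (a, b))) /\
         (forall a b, Mdom M a -> Mdom M b -> eval p [:: a; b] (bool_nat (d a b)))) /\
      (exists p, forall a b, Mdom M a -> Mdom M b -> eval p [:: a; b] (cd_pair (eta (a, b)))) /\
      (exists p, forall x, Mdom M x -> invertible M x ->
         exists y, [/\ Mdom M y, mop M x y = me M, mop M y x = me M & eval p [:: x] y]).

(* Transducers with output in M.  States: 0..nQ-1, input letters:      *)
(* 0..nSig-1, transitions (p, a, m, q) with a = None for epsilon.       *)
Record transducer := Transducer {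
  nQ : nat; nSig : nat; tI : seq nat; tF : seq nat;
  tDelta : seq (nat * option nat * nat * nat) }.

Definition wf_transducer (M : nmonoid) (T : transducer) : Prop :=
  [/\ all (fun q => q < nQ T) (tI T), all (fun q => q < nQ T) (tF T) &
      forall p a m q, (p, a, m, q) \in tDelta T ->
        [/\ p < nQ T, q < nQ T, Mdom M m & (if a is Some x then x < nSig T else true)]].

Definition oword (a : option nat) : seq nat := if a is Some x then [:: x] else [::].

Inductive tpath (M : nmonoid) (T : transducer) : nat -> seq nat -> nat -> nat -> Prop :=
| tp_nil p : p < nQ T -> tpath M T p [::] (me M) p
| tp_cons p a m q u m' r :
    (p, a, m, q) \in tDelta T -> tpath M T q u m' r ->
    tpath M T p (oword a ++ u) (mop M m m') r.

(* A monoidal automaton over M x M with states Q x Q (I x I, F x F) *)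
Definition sqautomaton := seq ((nat * nat) * (nat * nat) * (nat * nat)).

Inductive spath (M : nmonoid) (T : transducer) (A : sqautomaton) :
  nat * nat -> nat * nat -> nat * nat -> Prop :=
| sp_nil p : p.1 < nQ T -> p.2 < nQ T -> spath M T A p (me M, me M) p
| sp_cons p m q n r :
    (p, m, q) \in A -> spath M T A q n r ->
    spath M T A p (mop M m.1 n.1, mop M m.2 n.2) r.

Definition inI2 (T : transducer) (q : nat * nat) := (q.1 \in tI T) && (q.2 \in tI T).
Definition inF2 (T : transducer) (q : nat * nat) := (q.1 \in tF T) && (q.2 \in tF T).

Definition squared_output_automaton (M : nmonoid) (T : transducer) (A : sqautomaton) : Prop :=
  (forall p m q, (p, m, q) \in A ->
     [/\ p.1 < nQ T, p.2 < nQ T, q.1 < nQ T, q.2 < nQ T & Mdom M m.1 && Mdom M m.2]) /\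
  (forall p m q, spath M T A p m q <->
     exists u : seq nat, tpath M T p.1 u m.1 q.1 /\ tpath M T p.2 u m.2 q.2).

Definition on_successful_path M T A (q : nat * nat) : Prop :=
  exists i f mi mf, [/\ inI2 T i, inF2 T f, spath M T A i mi q & spath M T A q mf f].

Definition relevant_pair M T A (q m : nat * nat) : Prop :=
  on_successful_path M T A q /\ exists i, inI2 T i /\ spath M T A i m q.

Definition valuation M (eta : nat * nat -> nat * nat) T A
    (rho nu : nat * nat -> option (nat * nat)) : Prop :=
  forall q, q.1 < nQ T -> q.2 < nQ T ->
  [/\ (rho q <> None <-> exists m, relevant_pair M T A q m),
      (forall m, rho q = Some m ->
          if inI2 T q then m = (me M, me M) else relevant_pair M T A q m) &
      (match rho q with
       | Some m => if m.1 == m.2 then nu q = Some (me M, me M)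
                   else (equalizable M m -> nu q = Some (eta m)) /\
                        (~ equalizable M m -> nu q = None)
       | None => nu q = None
       end)].

Definition cd_opt_nat (a : option nat) : nat := if a is Some x then x.+1 else 0.
Definition cd_tr (t : nat * option nat * nat * nat) : nat :=
  let: (p, a, m, q) := t in cd [:: p; cd_opt_nat a; m; q].
Definition cd_tr2 (t : (nat * nat) * (nat * nat) * (nat * nat)) : nat :=
  let: (p, m, q) := t in cd [:: p.1; p.2; m.1; m.2; q.1; q.2].
Definition cd_input (T : transducer) (A : sqautomaton) : nat :=
  cd [:: nQ T; nSig T; cd (tI T); cd (tF T);
         cd [seq cd_tr t | t <- tDelta T]; cd [seq cd_tr2 t | t <- A]].

Definition cd_valuation (n : nat) (rho nu : nat * nat -> option (nat * nat)) : nat :=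
  cd [seq cd [:: cd_opt_pair (rho (i, j)); cd_opt_pair (nu (i, j))]
     | i <- iota 0 n, j <- iota 0 n].

From mathcomp Require Import all_boot zify.
Set Implicit Arguments. Unset Strict Implicit. Unset Printing Implicit Defensive.

(* Relevant pairs are found by saturating two tables indexed by the states
   of the squared automaton.  The forward table starts with the label (e, e)
   on I x I and, along each transition p --(m1, m2)--> q of A^2, gives an
   empty entry q the label of p multiplied by (m1, m2); the backward table
   marks F x F and propagates the marks against the transitions.  A round
   that does not close a table under the transitions fills a new entry, so
   |Q|^2 rounds reach the fixed point: a state then carries a label iff it is
   reachable from I x I, each label is the output of such a path, and a
   state is marked iff it is co-reachable.  Hence rho is the forward label
   of the marked states, and nu is read off rho with the decision procedure
   for equalizability and eta.  The whole computation on Goedel codes is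
   expressed with closure properties of the computable functions, relative
   to the oracles of the monoid. *)

(** * Computable functions *)

Local Notation "xs .[ i ]" := (nth 0 xs i) : nat_scope.

Definition computable n (f : seq nat -> nat) :=
  exists p, forall xs, size xs = n -> eval p xs (f xs).

Definition computable_seq n (fs : seq (seq nat -> nat)) :=
  exists ps, forall xs, size xs = n -> evals ps xs [seq f xs | f <- fs].

Lemma eq_computable n f g :
  (forall xs, size xs = n -> f xs = g xs) -> computable n f -> computable n g.
Proof. by move=> fg [p Hp]; exists p => xs Hxs; rewrite -fg //; apply: Hp. Qed.

Lemma computable_proj n i : i < n -> computable n (fun xs => xs.[i]).
Proof. by move=> lt_in; exists (PProj i) => xs Hxs; apply: eProj; rewrite Hxs. Qed.

Lemma computable_succn : computable 1 (fun xs => xs.[0].+1).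
Proof. by exists PSucc => [[|x []]] //= _; apply: eSucc. Qed.

Lemma computable_seq_nil n : computable_seq n [::].
Proof. by exists [::] => xs _; apply: esNil. Qed.

Lemma computable_seq_cons n f fs :
  computable n f -> computable_seq n fs -> computable_seq n (f :: fs).
Proof.
by move=> [p Hp] [ps Hps]; exists (p :: ps) => xs Hxs; apply: esCons; [apply: Hp | apply: Hps].
Qed.

Lemma computable_comp n g fs : computable (size fs) g -> computable_seq n fs ->
  computable n (fun xs => g [seq f xs | f <- fs]).
Proof.
move=> [pg Hg] [ps Hps]; exists (PComp pg ps) => xs Hxs.
by apply: eComp (Hps xs Hxs) _; apply: Hg; rewrite size_map.
Qed.

Lemma computable_seq_drop d n :
  computable_seq (d + n) [seq (fun xs => xs.[i]) | i <- iota d n].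
Proof.
elim: n d => [|n IHn] d; first exact: computable_seq_nil.
apply: computable_seq_cons; first by apply: computable_proj; lia.
by rewrite -addSnnS; apply: IHn.
Qed.

Lemma map_nth_drop d n (xs : seq nat) : size xs = d + n ->
  [seq xs.[i] | i <- iota d n] = drop d xs.
Proof.
move=> Hxs; rewrite map_nth_iota; last lia.
by rewrite take_oversize // size_drop; lia.
Qed.

Lemma computable_drop d n f : computable n f -> computable (d + n) (fun xs => f (drop d xs)).
Proof.
move=> Hf; have := computable_comp _ (computable_seq_drop d n).
rewrite size_map size_iota => /(_ _ Hf).
by apply: eq_computable => xs Hxs; rewrite -map_comp map_nth_drop.
Qed.

Lemma computable_shift d n f e :
  computable n.+1 (fun ys => f ys.[0] (drop 1 ys)) -> computable (d + n) e ->
  computable (d + n) (fun xs => f (e xs) (drop d xs)).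
Proof.
move=> Hf He; have := computable_comp _ (computable_seq_cons He (computable_seq_drop d n)).
rewrite /= size_map size_iota => /(_ _ Hf).
by apply: eq_computable => xs Hxs; rewrite /= drop0 -map_comp map_nth_drop.
Qed.

Lemma computable_proj_drop n d i : d + i < n -> computable n (fun xs => (drop d xs).[i]).
Proof. by move=> lt_n; apply: eq_computable (computable_proj lt_n) => xs _; rewrite nth_drop. Qed.

Lemma computable_proj_drop2 n d1 d2 i :
  d1 + d2 + i < n -> computable n (fun xs => (drop d1 (drop d2 xs)).[i]).
Proof.
move=> lt_n; apply: eq_computable (computable_proj_drop lt_n) => xs _.
by rewrite drop_drop.
Qed.

Lemma computable_app1 n h a :
  computable 1 (fun ys => h ys.[0]) -> computable n a -> computable n (fun xs => h (a xs)).
Proof.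
move=> Hh Ha.
have := @computable_comp n _ [:: a] Hh (computable_seq_cons Ha (computable_seq_nil n)).
exact: eq_computable.
Qed.

Lemma computable_app2 n h a b :
  computable 2 (fun ys => h ys.[0] ys.[1]) -> computable n a -> computable n b ->
  computable n (fun xs => h (a xs) (b xs)).
Proof.
move=> Hh Ha Hb; have := @computable_comp n _ [:: a; b] Hh
  (computable_seq_cons Ha (computable_seq_cons Hb (computable_seq_nil n))).
exact: eq_computable.
Qed.

Lemma computable_app3 n h a b c :
  computable 3 (fun ys => h ys.[0] ys.[1] ys.[2]) -> computable n a -> computable n b ->
  computable n c -> computable n (fun xs => h (a xs) (b xs) (c xs)).
Proof.
move=> Hh Ha Hb Hc; have := @computable_comp n _ [:: a; b; c] Hh
  (computable_seq_cons Ha (computable_seq_cons Hb (computable_seq_cons Hc (computable_seq_nil n)))).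
exact: eq_computable.
Qed.

Lemma computable_app4 n h a b c d :
  computable 4 (fun ys => h ys.[0] ys.[1] ys.[2] ys.[3]) -> computable n a -> computable n b ->
  computable n c -> computable n d -> computable n (fun xs => h (a xs) (b xs) (c xs) (d xs)).
Proof.
move=> Hh Ha Hb Hc Hd; have := @computable_comp n _ [:: a; b; c; d] Hh
  (computable_seq_cons Ha (computable_seq_cons Hb (computable_seq_cons Hc
    (computable_seq_cons Hd (computable_seq_nil n))))).
exact: eq_computable.
Qed.

Lemma computable_const n k : computable n (fun _ => k).
Proof.
elim: k => [|k IHk]; first by exists PZero => xs _; apply: eZero.
exact: computable_app1 computable_succn IHk.
Qed.

Lemma computable_iteri n k init step :
  computable n k -> computable n init ->
  computable n.+2 (fun ys => step ys.[0] ys.[1] (drop 2 ys)) ->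
  computable n (fun xs => iteri (k xs) (fun i acc => step i acc xs) (init xs)).
Proof.
move=> Hk [pi Hi] [ps Hs].
have Hrec : computable n.+1
    (fun ys => iteri ys.[0] (fun i acc => step i acc (drop 1 ys)) (init (drop 1 ys))).
  exists (PRec pi ps) => [[|i xs]] //= [Hxs]; rewrite drop0.
  elim: i => [|i IHi]; first by apply: eRec0; apply: Hi.
  apply: eRecS IHi _; have := Hs [:: i, iteri i (fun i acc => step i acc xs) (init xs) & xs].
  by rewrite /= drop0 Hxs; apply.
have := computable_comp _ (computable_seq_cons Hk (computable_seq_drop 0 n)).
rewrite /= size_map size_iota => /(_ _ Hrec).
by apply: eq_computable => xs Hxs; rewrite /= drop0 -map_comp map_nth_drop ?drop0.
Qed.

Lemma computable_iter n k init step :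
  computable n k -> computable n init -> computable n.+1 (fun ys => step ys.[0] (drop 1 ys)) ->
  computable n (fun xs => iter (k xs) (fun acc => step acc xs) (init xs)).
Proof.
move=> Hk Hinit Hstep.
have Hstep2 : computable n.+2 (fun ys => step ys.[1] (drop 2 ys)).
  by apply: eq_computable (computable_drop 1 Hstep) => ys _; rewrite nth_drop drop_drop.
have := computable_iteri (step := fun _ acc xs => step acc xs) Hk Hinit Hstep2.
by apply: eq_computable => xs _; elim: (k xs) => //= m ->.
Qed.

Lemma computable_if n b f g :
  computable n (fun xs => bool_nat (b xs)) -> computable n f -> computable n g ->
  computable n (fun xs => if b xs then f xs else g xs).
Proof.
move=> Hb Hf Hg; have := computable_iter (step := fun _ => f) Hb Hg (computable_drop 1 Hf).
by apply: eq_computable => xs _; case: (b xs).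
Qed.

Lemma computable_eq0 n a :
  computable n a -> computable n (fun xs => bool_nat (a xs == 0)).
Proof.
move=> Ha; have := computable_iter (step := fun _ _ => 0) Ha (computable_const n 1)
  (computable_const _ 0).
by apply: eq_computable => xs _; case: (a xs).
Qed.

Lemma computable_negb n b :
  computable n (fun xs => bool_nat (b xs)) -> computable n (fun xs => bool_nat (~~ b xs)).
Proof. by move/computable_eq0; apply: eq_computable => xs _; case: (b xs). Qed.

Lemma computable_andb n b c :
  computable n (fun xs => bool_nat (b xs)) -> computable n (fun xs => bool_nat (c xs)) ->
  computable n (fun xs => bool_nat (b xs && c xs)).
Proof.
move=> Hb Hc; have := computable_if Hb Hc (computable_const n 0).
by apply: eq_computable => xs _; case: (b xs).
Qed.

Lemma computable_predn : computable 1 (fun xs => xs.[0].-1).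
Proof.
apply: eq_computable (_ : computable 1 (fun xs => iteri xs.[0] (fun i _ => i) 0)).
  by move=> xs _; case: xs.[0].
by apply: computable_iteri;
  [apply: computable_proj | apply: computable_const | apply: computable_proj].
Qed.

Lemma computable_leq n a b : computable n a -> computable n b ->
  computable n (fun xs => bool_nat (a xs <= b xs)).
Proof.
move=> Ha Hb; apply: eq_computable
  (_ : computable n (fun xs => bool_nat (iter (b xs) predn (a xs) == 0))).
  by move=> xs _; rewrite iter_predn subn_eq0.
apply/computable_eq0/computable_iter => //.
exact: computable_app1 computable_predn (computable_proj _).
Qed.

Lemma computable_eqn n a b : computable n a -> computable n b ->
  computable n (fun xs => bool_nat (a xs == b xs)).
Proof.
move=> Ha Hb; apply: eq_computable
  (_ : computable n (fun xs => bool_nat ((a xs <= b xs) && (b xs <= a xs)))).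
  by move=> xs _; rewrite eqn_leq.
by apply: computable_andb; apply: computable_leq.
Qed.

Lemma computable_addn : computable 2 (fun xs => xs.[0] + xs.[1]).
Proof.
apply: eq_computable (_ : computable 2 (fun xs => iter xs.[1] (fun acc => acc.+1) xs.[0])).
  by move=> xs _; apply: iter_succn.
apply: computable_iter; [exact: computable_proj | exact: computable_proj |].
exact: computable_app1 computable_succn (computable_proj _).
Qed.

Lemma computable_muln : computable 2 (fun xs => xs.[0] * xs.[1]).
Proof.
apply: eq_computable (_ : computable 2 (fun xs => iter xs.[1] (fun acc => xs.[0] + acc) 0)).
  by move=> xs _; apply: iter_addn_0.
apply: computable_iter; [exact: computable_proj | exact: computable_const |].
exact: computable_app2 computable_addn (computable_proj_drop _) (computable_proj _).
Qed.

Lemma computable_subn : computable 2 (fun xs => xs.[0] - xs.[1]).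
Proof.
apply: eq_computable (_ : computable 2 (fun xs => iter xs.[1] (fun acc => acc.-1) xs.[0])).
  by move=> xs _; apply: iter_predn.
apply: computable_iter; [exact: computable_proj | exact: computable_proj |].
exact: computable_app1 computable_predn (computable_proj _).
Qed.

Lemma computable_expn : computable 2 (fun xs => xs.[0] ^ xs.[1]).
Proof.
apply: eq_computable (_ : computable 2 (fun xs => iter xs.[1] (fun acc => xs.[0] * acc) 1)).
  by move=> xs _; apply: iter_muln_1.
apply: computable_iter; [exact: computable_proj | exact: computable_const |].
exact: computable_app2 computable_muln (computable_proj_drop _) (computable_proj _).
Qed.

Lemma computable_sum n k f :
  computable n k -> computable n.+1 (fun ys => f ys.[0] (drop 1 ys)) ->
  computable n (fun xs => \sum_(0 <= j < k xs) f j xs).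
Proof.
move=> Hk Hf; have Hstep : computable (2 + n) (fun ys => ys.[1] + f ys.[0] (drop 2 ys)).
  apply: (computable_app2 computable_addn); first exact: computable_proj.
  by apply: computable_shift Hf _; apply: computable_proj.
have := computable_iteri (step := fun j acc xs => acc + f j xs) Hk (computable_const n 0) Hstep.
apply: eq_computable => xs _; elim: (k xs) => [|m IHm]; first by rewrite big_geq.
by rewrite big_nat_recr //= IHm.
Qed.

Definition code_cons x c := 2 ^ x * c.*2.+1.

Lemma computable_code_cons : computable 2 (fun xs => code_cons xs.[0] xs.[1]).
Proof.
apply: (computable_app2 computable_muln).
  exact: computable_app2 computable_expn (computable_const 2 2) (computable_proj _).
apply: (computable_app1 computable_succn).
have Hx1 : computable 2 (fun xs => xs.[1]) by apply: computable_proj.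
by apply: eq_computable (computable_app2 computable_addn Hx1 Hx1) => xs _; apply: addnn.
Qed.

Lemma computable_code_seq_cons n a l :
  computable n a -> computable n (fun xs => CodeSeq.code (l xs)) ->
  computable n (fun xs => CodeSeq.code (a xs :: l xs)).
Proof. exact: computable_app2 computable_code_cons. Qed.

(* [CodeSeq.code] is a right fold, so a code is built from the last item on. *)
Lemma code_mkseq_iteri f k :
  CodeSeq.code (mkseq f k) = iteri k (fun i acc => code_cons (f (k - i.+1)) acc) 0.
Proof.
suff gen t : t <= k -> iteri t (fun i acc => code_cons (f (k - i.+1)) acc) 0 =
    CodeSeq.code [seq f j | j <- iota (k - t) t] by rewrite gen ?subnn.
elim: t => [|t IHt] lt_tk; first by [].
rewrite iteriS IHt; last exact: ltnW.
by rewrite -(subnSK lt_tk).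
Qed.

Lemma computable_code_mkseq n k f :
  computable n k -> computable n.+1 (fun ys => f ys.[0] (drop 1 ys)) ->
  computable n (fun xs => CodeSeq.code (mkseq (f^~ xs) (k xs))).
Proof.
move=> Hk Hf; have Hstep : computable (2 + n)
    (fun ys => code_cons (f (k (drop 2 ys) - ys.[0].+1) (drop 2 ys)) ys.[1]).
  apply: (computable_app2 computable_code_cons); last exact: computable_proj.
  apply: computable_shift Hf _; apply: (computable_app2 computable_subn).
    exact: computable_drop.
  exact: computable_app1 computable_succn (computable_proj _).
have := computable_iteri (step := fun i acc xs => code_cons (f (k xs - i.+1) xs) acc) Hk
  (computable_const n 0) Hstep.
by apply: eq_computable => xs _; rewrite code_mkseq_iteri.
Qed.

Create HintDb computable.
Hint Resolve computable_succn computable_predn computable_addn computable_muln : computable.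
Hint Resolve computable_subn computable_expn computable_code_cons : computable.

(* [computable_step] follows the syntax of [t] in [computable n (fun xs => t)];
   an application [h t1 .. tk] is decomposed when the database [computable]
   contains [computable k (fun ys => h ys.[0] .. ys.[k-1])]. *)
Ltac computable_step :=
  match goal with
  | |- computable _ (fun _ => nth 0 _ _) =>
      first [ apply: computable_proj; done | apply: computable_proj_drop; done
            | apply: computable_proj_drop2; done ]
  | |- computable _ (fun _ => bool_nat (~~ _)) => apply: computable_negb
  | |- computable _ (fun _ => bool_nat (_ && _)) => apply: computable_andb
  | |- computable _ (fun _ => bool_nat (_ <= _)) => apply: computable_leq
  | |- computable _ (fun _ => bool_nat (_ == _)) => apply: computable_eqn
  | |- computable _ (fun _ => if _ then _ else _) => apply: computable_if
  | |- computable _ (fun _ => iter _ _ _) => apply: computable_iter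
  | |- computable _ (fun _ => iteri _ _ _) => apply: computable_iteri
  | |- computable _ (fun _ => bigop _ _ _) => apply: computable_sum
  | |- computable _ (fun _ => CodeSeq.code (mkseq _ _)) => apply: computable_code_mkseq
  | |- computable _ (fun _ => CodeSeq.code (_ :: _)) => apply: computable_code_seq_cons
  | |- _ => first
      [ apply: computable_const
      | apply: computable_app4; first solve [eauto with computable]
      | apply: computable_app3; first solve [eauto with computable]
      | apply: computable_app2; first solve [eauto with computable]
      | apply: computable_app1; first solve [eauto with computable] ]
  end.

Ltac computability := repeat computable_step.

Lemma sum_ltn_nat L c : L <= c -> \sum_(0 <= j < c) (j < L) = L.
Proof.
move=> le_Lc; rewrite (@big_cat_nat _ _ _ L 0 c _ _ (leq0n L) le_Lc) /=.
rewrite (eq_big_nat _ _ (F2 := fun=> 1)) => [|j /andP[_ ->] //].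
rewrite [X in _ + X](eq_big_nat _ _ (F2 := fun=> 0)) => [|j /andP[]]; last first.
  by rewrite leqNgt => /negbTE ->.
by rewrite !sum_nat_const_nat muln1 muln0 addn0 subn0.
Qed.

Lemma computable_divn : computable 2 (fun xs => xs.[0] %/ xs.[1]).
Proof.
apply: eq_computable (_ : computable 2 (fun xs =>
  if xs.[1] == 0 then 0 else \sum_(0 <= j < xs.[0]) bool_nat (j.+1 * xs.[1] <= xs.[0]))).
  move=> xs _; case: eqP => [->|/eqP]; first by rewrite divn0.
  rewrite -lt0n => d_gt0; rewrite -[RHS](sum_ltn_nat (leq_div _ _)); apply: eq_big_nat => j _.
  by rewrite -leq_divRL //; case: ltnP.
by computability.
Qed.
Hint Resolve computable_divn : computable.

Lemma computable_modn : computable 2 (fun xs => xs.[0] %% xs.[1]).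
Proof.
apply: eq_computable (_ : computable 2 (fun xs => xs.[0] - xs.[0] %/ xs.[1] * xs.[1])).
  by move=> xs _; rewrite {1}(divn_eq xs.[0] xs.[1]) addKn.
by computability.
Qed.
Hint Resolve computable_modn : computable.

Lemma computable_logn2 : computable 1 (fun xs => logn 2 xs.[0]).
Proof.
apply: eq_computable (_ : computable 1 (fun xs =>
  \sum_(0 <= j < xs.[0].-1) bool_nat (xs.[0] %% 2 ^ j.+1 == 0))).
  by move=> xs _; rewrite logn_count_dvd // big_add1.
by computability.
Qed.
Hint Resolve computable_logn2 : computable.

(** * Decoding codes of sequences *)

(* [CodeSeq.code (x :: s) = 2 ^ x * (CodeSeq.code s).*2.+1]: the head of a
   code is its 2-adic valuation. *)
Definition code_behead c := c %/ 2 ^ (logn 2 c).+1.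
Definition code_nth c i := logn 2 (iter i code_behead c).
Definition code_size c := \sum_(0 <= j < c) bool_nat (iter j code_behead c != 0).

Lemma logn2_code s : logn 2 (CodeSeq.code s) = head 0 s.
Proof.
case: s => [|x s] /=; first by rewrite logn0.
rewrite lognM ?expn_gt0 // pfactorK // logn_coprime ?addn0 //.
by rewrite coprime2n /= odd_double.
Qed.

Lemma iter_code_behead i s : iter i code_behead (CodeSeq.code s) = CodeSeq.code (drop i s).
Proof.
elim: i => [|i IHi]; first by rewrite drop0.
rewrite iterS IHi -add1n -drop_drop drop1 /code_behead logn2_code.
case: (drop i s) => [|x t] /=; first by rewrite div0n.
by rewrite expnSr divnMl ?expn_gt0 // divn2 -add1n (half_bit_double _ true).
Qed.

Lemma code_nth_code s i : code_nth (CodeSeq.code s) i = nth 0 s i.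
Proof. by rewrite /code_nth iter_code_behead logn2_code -nth0 nth_drop addn0. Qed.

Lemma size_le_code s : size s <= CodeSeq.code s.
Proof.
elim: s => //= x s IHs; rewrite -/(CodeSeq.code s).
by apply: leq_trans (leq_pmull _ (expn_gt0 2 x)); rewrite ltnS -addnn (leq_trans IHs) ?leq_addr.
Qed.

Lemma code_size_code s : code_size (CodeSeq.code s) = size s.
Proof.
rewrite /code_size -[RHS](sum_ltn_nat (size_le_code s)); apply: eq_big_nat => j _.
have code_eq0 t : (CodeSeq.code t == 0) = nilp t by case: t => //= x t; rewrite muln_eq0 expn_eq0.
by rewrite iter_code_behead code_eq0 /nilp size_drop subn_eq0 -ltnNge; case: ltnP.
Qed.

Lemma code_nth_mkseq f k i : code_nth (CodeSeq.code (mkseq f k)) i = if i < k then f i else 0.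
Proof.
rewrite code_nth_code; case: ltnP => [lt_ik|le_ki]; first by rewrite nth_mkseq.
by rewrite nth_default // size_mkseq.
Qed.

Lemma computable_code_nth : computable 2 (fun xs => code_nth xs.[0] xs.[1]).
Proof. by rewrite /code_nth /code_behead; computability. Qed.

Lemma computable_code_size : computable 1 (fun xs => code_size xs.[0]).
Proof. by rewrite /code_size /code_behead; computability. Qed.

Hint Resolve computable_code_nth computable_code_size : computable.

Lemma mkseq_code_nth (f : nat -> nat) s :
  mkseq (fun j => f (code_nth (CodeSeq.code s) j)) (code_size (CodeSeq.code s)) = map f s.
Proof.
rewrite code_size_code -[in RHS](mkseq_nth 0 s) /mkseq -map_comp.
by apply: eq_map => j; rewrite /= code_nth_code.
Qed.

Definition code_mem a S := \sum_(0 <= j < code_size S) bool_nat (code_nth S j == a) != 0.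

Lemma code_mem_code a s : code_mem a (CodeSeq.code s) = (a \in s).
Proof.
rewrite /code_mem code_size_code sum_nat_seq_neq0 -has_pred1 -[in RHS](mkseq_nth 0 s) has_map.
by rewrite /index_iota subn0; apply: eq_has => j; rewrite /= code_nth_code; case: (_ == a).
Qed.

(* [pair_code a b] is [cd_opt_pair (Some (a, b))]: labels are stored in the
   output format. *)
Definition pair_code a b := (CodeSeq.code [:: a; b]).+1.

Definition decode_pair c := if c is c'.+1 then Some (code_nth c' 0, code_nth c' 1) else None.

Lemma decode_pair_code a b : decode_pair (pair_code a b) = Some (a, b).
Proof. by rewrite /decode_pair /pair_code !code_nth_code. Qed.

Lemma succ_cd_pair p : (cd_pair p).+1 = pair_code p.1 p.2.
Proof. by []. Qed.


(** * Saturation of tables *)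

Lemma count_lt_sub (T : eqType) (a b : pred T) s :
  subpred a b -> (exists2 x, x \in s & b x && ~~ a x) -> count a s < count b s.
Proof.
move=> sub_ab [x]; elim: s => //= y s IHs; rewrite inE => /orP[/eqP <- /andP[-> /negbTE ->]|s_x bx].
  by rewrite add0n add1n ltnS sub_count.
by case ay: (a y); [rewrite (sub_ab _ ay) ltn_add2l | apply: ltn_addl]; apply: IHs.
Qed.

(* A table is the code of a list of [N] entries, [0] marking an empty entry;
   an edge is a code whose items 0 and 1 are the indices of its source and
   target. *)
Section Saturation.

Variable upd : nat -> nat -> nat.

Local Notation src e := (code_nth e 0).
Local Notation dst e := (code_nth e 1).

Definition enters T k e := (dst e == k) && (code_nth T (src e) != 0).

Definition relax T es k :=
  iteri (code_size es) (fun j acc => if enters T k (code_nth es j)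
    then upd (code_nth es j) (code_nth T (src (code_nth es j))) else acc) 0.

Definition round N es T := CodeSeq.code
  (mkseq (fun k => if code_nth T k != 0 then code_nth T k else relax T es k) N).

Definition saturate N es T := iter N (fun T => round N es T) T.

Section Computability.

Hypothesis computable_upd : computable 2 (fun xs => upd xs.[0] xs.[1]).
Local Hint Resolve computable_upd : computable.

Lemma computable_relax : computable 3 (fun xs => relax xs.[0] xs.[1] xs.[2]).
Proof. by rewrite /relax /enters; computability. Qed.
Local Hint Resolve computable_relax : computable.

Lemma computable_round : computable 3 (fun xs => round xs.[0] xs.[1] xs.[2]).
Proof. by rewrite /round; computability. Qed.
Local Hint Resolve computable_round : computable.

Lemma computable_saturate : computable 3 (fun xs => saturate xs.[0] xs.[1] xs.[2]).
Proof. by rewrite /saturate; computability. Qed.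

End Computability.

Section Invariants.

Hypothesis upd_neq0 : forall e x, upd e x != 0.
Variables (N : nat) (es : seq nat).
Hypothesis dst_lt : forall e, e \in es -> dst e < N.

Lemma relax_spec T k : (relax T (CodeSeq.code es) k != 0) = has (enters T k) es /\
  (relax T (CodeSeq.code es) k != 0 -> exists2 e, e \in es &
     enters T k e /\ relax T (CodeSeq.code es) k = upd e (code_nth T (src e))).
Proof.
rewrite /relax code_size_code; set step := fun _ _ => _.
have prefix j : j <= size es -> (iteri j step 0 != 0) = has (enters T k) (take j es) /\
    (iteri j step 0 != 0 -> exists2 e, e \in es &
       enters T k e /\ iteri j step 0 = upd e (code_nth T (src e))).
  elim: j => [|j IHj] lt_j; first by rewrite take0 eqxx.
  have [IH1 IH2] := IHj (ltnW lt_j).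
  have -> : iteri j.+1 step 0 = if enters T k (nth 0 es j)
      then upd (nth 0 es j) (code_nth T (src (nth 0 es j))) else iteri j step 0.
    by rewrite iteriS /step code_nth_code.
  rewrite (take_nth 0 lt_j) has_rcons; case: ifP => [enters_j|_] //.
  rewrite upd_neq0; split=> // _.
  by exists (nth 0 es j); first exact: mem_nth.
by rewrite -[in has _ es](take_size es); apply: prefix.
Qed.

Definition table_closed T :=
  all (fun e => (code_nth T (src e) != 0) ==> (code_nth T (dst e) != 0)) es.

Variable T0 : nat.
Hypothesis T0_out : forall k, N <= k -> code_nth T0 k = 0.

Local Notation table i := (iter i (fun T => round N (CodeSeq.code es) T) T0).

Lemma round_nth T k : code_nth (round N (CodeSeq.code es) T) k =
  if k < N then (if code_nth T k != 0 then code_nth T k else relax T (CodeSeq.code es) k) else 0.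
Proof. by rewrite /round code_nth_mkseq. Qed.

Lemma table_out i k : N <= k -> code_nth (table i) k = 0.
Proof. by case: i => [|i] le_Nk; [apply: T0_out | rewrite /= round_nth ltnNge le_Nk]. Qed.

Lemma table_keep i k : code_nth (table i) k != 0 -> code_nth (table i.+1) k = code_nth (table i) k.
Proof.
move=> nz; rewrite /= round_nth nz; case: ltnP => // le_Nk.
by move: nz; rewrite table_out ?eqxx.
Qed.

Lemma table_keep_le i j k : i <= j -> code_nth (table i) k != 0 ->
  code_nth (table j) k = code_nth (table i) k.
Proof.
move/subnKC <-; elim: (j - i) => [|d IHd] nz; first by rewrite addn0.
by rewrite addnS table_keep IHd ?nz.
Qed.

Lemma table_sound (P : nat -> nat -> Prop) :
  (forall k, code_nth T0 k != 0 -> P k (code_nth T0 k)) ->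
  (forall e x, e \in es -> x != 0 -> P (src e) x -> P (dst e) (upd e x)) ->
  forall i k, code_nth (table i) k != 0 -> P k (code_nth (table i) k).
Proof.
move=> P0 Pstep; elim=> [|i IHi] k; first exact: P0.
have [old|nz_old] := eqVneq (code_nth (table i) k) 0.
  rewrite /= round_nth old eqxx /=; case: ltnP => // _ nz_new.
  have [_ /(_ nz_new) [e es_e [/andP[/eqP <- nz_src] ->]]] := relax_spec (table i) k.
  exact: Pstep (IHi _ nz_src).
by rewrite table_keep //; apply: IHi.
Qed.

Lemma saturate_keep k : code_nth T0 k != 0 ->
  code_nth (saturate N (CodeSeq.code es) T0) k = code_nth T0 k.
Proof. exact: table_keep_le (leq0n N). Qed.

Lemma round_closed i : table_closed (table i) ->
  forall k, code_nth (table i.+1) k = code_nth (table i) k.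
Proof.
move=> cl k; rewrite /= round_nth; case: ltnP => [_|le_Nk]; last by rewrite table_out.
case: eqP => [old|] //=; rewrite old; apply/eqP; apply: contraT => nz_new.
have [_ /(_ nz_new) [e es_e [/andP[/eqP dst_e nz_src] _]]] := relax_spec (table i) k.
by move: (implyP (allP cl e es_e) nz_src); rewrite dst_e old eqxx.
Qed.

Local Notation filled T := (count (fun k => code_nth T k != 0) (iota 0 N)).

Lemma table_grows i : ~~ table_closed (table i) -> filled (table i) < filled (table i.+1).
Proof.
case/allPn => e es_e; rewrite negb_imply negbK => /andP[nz_src /eqP z_dst].
apply: count_lt_sub => [k /= nz|]; first by rewrite table_keep.
exists (dst e); first by rewrite mem_iota dst_lt.
rewrite z_dst eqxx andbT /= round_nth dst_lt // z_dst eqxx /=.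
by rewrite (relax_spec _ _).1; apply/hasP; exists e; rewrite // /enters eqxx.
Qed.

Lemma table_closed_or_filled i : table_closed (table i) \/ i <= filled (table i).
Proof.
elim: i => [|i IHi]; first by right.
have [cl|not_cl] := boolP (table_closed (table i)).
  left; apply/allP => e es_e; rewrite !round_closed //; exact: (allP cl).
case: IHi => [cl|IHi]; first by rewrite cl in not_cl.
by right; apply: leq_ltn_trans IHi _; apply: table_grows.
Qed.

Lemma saturate_closed : table_closed (saturate N (CodeSeq.code es) T0).
Proof.
have [//|full] := table_closed_or_filled N.
have all_nz : all (fun k => code_nth (table N) k != 0) (iota 0 N).
  by rewrite all_count eqn_leq count_size size_iota full.
apply/allP => e es_e; apply/implyP => _; apply: (allP all_nz).
by rewrite mem_iota dst_lt.
Qed.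

End Invariants.
End Saturation.

(** * The algorithm *)

(* The oracles of an effective monoid are only specified on elements of M;
   restricting their arguments makes them total computable functions. *)
Definition restrict (D : pred nat) x0 x := if D x then x else x0.

Definition restricted (D : pred nat) x0 (h : nat -> nat -> nat) a b :=
  h (restrict D x0 a) (restrict D x0 b).

Lemma restricted_dom (D : pred nat) x0 h a b : D a -> D b -> restricted D x0 h a b = h a b.
Proof. by rewrite /restricted /restrict => -> ->. Qed.

Lemma computable_restricted (D : pred nat) x0 h ph :
  D x0 -> computable 1 (fun xs => bool_nat (D xs.[0])) ->
  (forall a b, D a -> D b -> eval ph [:: a; b] (h a b)) ->
  computable 2 (fun xs => restricted D x0 h xs.[0] xs.[1]).
Proof.
move=> D_x0 HD Hh.
have Hr i : i < 2 -> computable 2 (fun xs => restrict D x0 xs.[i]).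
  move=> lt_i2; apply: computable_if; last exact: computable_const.
    exact: (@computable_app1 2 (fun x => bool_nat (D x)) _ HD (computable_proj lt_i2)).
  exact: computable_proj.
have D_restrict x : D (restrict D x0 x) by rewrite /restrict; case: ifP.
have [p0 Hp0] := Hr 0 isT; have [p1 Hp1] := Hr 1 isT.
exists (PComp ph [:: p0; p1]) => xs Hxs.
apply: eComp (esCons (Hp0 xs Hxs) (esCons (Hp1 xs Hxs) (esNil _))) _.
exact: Hh.
Qed.

(* The state [q] is stored at index [q.1 * n + q.2], and a transition
   [(p, m, q)] of the squared automaton is coded as
   [cd [:: p.1; p.2; m.1; m.2; q.1; q.2]] in the input. *)
Section Algorithm.

Variables (e : nat) (op dd eta : nat -> nat -> nat).

Definition init_table n S c := CodeSeq.code
  (mkseq (fun k => if code_mem (k %/ n) S && code_mem (k %% n) S then c else 0) (n * n)).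

Definition fwd_edge n t := CodeSeq.code [:: code_nth t 0 * n + code_nth t 1;
  code_nth t 4 * n + code_nth t 5; code_nth t 2; code_nth t 3].

Definition bwd_edge n t :=
  CodeSeq.code [:: code_nth t 4 * n + code_nth t 5; code_nth t 0 * n + code_nth t 1].

Definition fwd_label t x :=
  pair_code (op (code_nth x.-1 0) (code_nth t 2)) (op (code_nth x.-1 1) (code_nth t 3)).

Lemma fwd_label_pair t a b :
  fwd_label t (pair_code a b) = pair_code (op a (code_nth t 2)) (op b (code_nth t 3)).
Proof. by rewrite /fwd_label /pair_code succnK !code_nth_code. Qed.

Definition fwd_table n I A := saturate fwd_label (n * n)
  (CodeSeq.code (mkseq (fun j => fwd_edge n (code_nth A j)) (code_size A)))
  (init_table n I (pair_code e e)).

Definition bwd_table n F A := saturate (fun _ _ => 1) (n * n)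
  (CodeSeq.code (mkseq (fun j => bwd_edge n (code_nth A j)) (code_size A)))
  (init_table n F 1).

Definition rho_entry Fw B k := if code_nth B k != 0 then code_nth Fw k else 0.

Definition nu_entry r :=
  if r == 0 then 0 else
  if code_nth r.-1 0 == code_nth r.-1 1 then pair_code e e else
  if dd (code_nth r.-1 0) (code_nth r.-1 1) != 0 then (eta (code_nth r.-1 0) (code_nth r.-1 1)).+1
  else 0.

Lemma nu_entry_pair a b : nu_entry (pair_code a b) =
  if a == b then pair_code e e else if dd a b != 0 then (eta a b).+1 else 0.
Proof. by rewrite /nu_entry /pair_code succnK !code_nth_code. Qed.

Definition valuation_code n Fw B := CodeSeq.code
  (mkseq (fun k => CodeSeq.code [:: rho_entry Fw B k; nu_entry (rho_entry Fw B k)]) (n * n)).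

Definition valuation_alg x :=
  let n := code_nth x 0 in
  valuation_code n (fwd_table n (code_nth x 2) (code_nth x 5))
                   (bwd_table n (code_nth x 3) (code_nth x 5)).

Hypotheses (computable_op : computable 2 (fun xs => op xs.[0] xs.[1]))
  (computable_dd : computable 2 (fun xs => dd xs.[0] xs.[1]))
  (computable_eta : computable 2 (fun xs => eta xs.[0] xs.[1])).
Local Hint Resolve computable_op computable_dd computable_eta : computable.

Lemma computable_pair_code : computable 2 (fun xs => pair_code xs.[0] xs.[1]).
Proof. by rewrite /pair_code; computability. Qed.
Local Hint Resolve computable_pair_code : computable.

Lemma computable_init_table : computable 3 (fun xs => init_table xs.[0] xs.[1] xs.[2]).
Proof. by rewrite /init_table /code_mem; computability. Qed.
Local Hint Resolve computable_init_table : computable.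

Lemma computable_fwd_table : computable 3 (fun xs => fwd_table xs.[0] xs.[1] xs.[2]).
Proof.
have Hedge : computable 2 (fun xs => fwd_edge xs.[0] xs.[1]) by rewrite /fwd_edge; computability.
have Hlabel : computable 2 (fun xs => fwd_label xs.[0] xs.[1]) by rewrite /fwd_label; computability.
have Hsat := computable_saturate Hlabel.
by rewrite /fwd_table; computability.
Qed.

Lemma computable_bwd_table : computable 3 (fun xs => bwd_table xs.[0] xs.[1] xs.[2]).
Proof.
have Hedge : computable 2 (fun xs => bwd_edge xs.[0] xs.[1]) by rewrite /bwd_edge; computability.
have Hsat := computable_saturate (upd := fun _ _ => 1) (computable_const 2 1).
by rewrite /bwd_table; computability.
Qed.

Lemma computable_valuation_code : computable 3 (fun xs => valuation_code xs.[0] xs.[1] xs.[2]).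
Proof. by rewrite /valuation_code /nu_entry /rho_entry; computability. Qed.

Local Hint Resolve computable_fwd_table computable_bwd_table computable_valuation_code : computable.

Lemma computable_valuation_alg : computable 1 (fun xs => valuation_alg xs.[0]).
Proof. by rewrite /valuation_alg; computability. Qed.

End Algorithm.

(** * Correctness *)

Lemma allpairs_iota (G : nat -> nat) n m :
  [seq G (i * n + j) | i <- iota 0 m, j <- iota 0 n] = [seq G k | k <- iota 0 (m * n)].
Proof.
elim: m => [|m IHm] //.
rewrite -addn1 iotaD allpairs_cat IHm mulnDl mul1n iotaD map_cat /= add0n cats0.
congr (_ ++ _); rewrite add0n -[in RHS](addn0 (m * n)) iotaDl -map_comp.
by apply: eq_map.
Qed.

Section Correctness.

Variables (M : nmonoid) (eta : nat * nat -> nat * nat) (d : nat -> nat -> bool).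
Hypotheses (monoidM : is_monoid M)
  (dP : forall a b, Mdom M a -> Mdom M b -> d a b <-> equalizable M (a, b)).
Variables (T : transducer) (A : sqautomaton).
Hypotheses (wfT : wf_transducer M T) (sqA : squared_output_automaton M T A).

Local Notation n := (nQ T).
Local Notation dom := (Mdom M).
Local Notation e := (me M).
Local Notation op := (mop M).
Local Notation opR := (restricted dom e op).
Local Notation ddR := (restricted dom e (fun a b => bool_nat (d a b))).
Local Notation etaR := (restricted dom e (fun a b => cd_pair (eta (a, b)))).
Local Notation es := [seq cd_tr2 t | t <- A].
Local Notation Fw := (fwd_table e opR n (CodeSeq.code (tI T)) (CodeSeq.code es)).
Local Notation Bw := (bwd_table n (CodeSeq.code (tF T)) (CodeSeq.code es)).
Local Notation index q := (q.1 * n + q.2).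
Local Notation unindex k := (k %/ n, k %% n).

Let dom_e : dom e. Proof. by case: monoidM. Qed.
Let dom_op a b : dom a -> dom b -> dom (op a b).
Proof. by case: monoidM => _ dom_op _ _ _; apply: dom_op. Qed.

Let transitionP p m q : (p, m, q) \in A ->
  [/\ p.1 < n, p.2 < n, q.1 < n, q.2 < n & dom m.1 && dom m.2].
Proof. by case: sqA => H _ /H. Qed.

Lemma spath_dom p m q : spath M T A p m q -> dom m.1 /\ dom m.2.
Proof.
elim=> [r _ _|p0 m0 q0 n0 r A_m0 _ [dom1 dom2]] //=.
by have [_ _ _ _ /andP[dom_m1 dom_m2]] := transitionP A_m0; split; apply: dom_op.
Qed.

Lemma spath_rcons i l p m q : spath M T A i l p -> (p, m, q) \in A ->
  spath M T A i (op l.1 m.1, op l.2 m.2) q.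
Proof.
have [_ _ assoc unit_l unit_r] := monoidM.
move=> path_ip; elim: path_ip m q => [r r1 r2|p0 m0 q0 n0 r A_m0 path_q0 IHpath] m q A_m /=.
  have [_ _ q1 q2 /andP[dom_m1 dom_m2]] := transitionP A_m.
  rewrite !unit_l //; have := sp_cons A_m (sp_nil M A q1 q2).
  by rewrite /= !unit_r // -surjective_pairing.
have [_ _ _ _ /andP[dom_m01 dom_m02]] := transitionP A_m0.
have [_ _ _ _ /andP[dom_m1 dom_m2]] := transitionP A_m.
have [dom_n1 dom_n2] := spath_dom path_q0.
by have := sp_cons A_m0 (IHpath _ _ A_m); rewrite /= !assoc.
Qed.

Lemma index_divn q : q.2 < n -> index q %/ n = q.1.
Proof.
move=> lt_q2; have n_gt0 : 0 < n by apply: leq_ltn_trans lt_q2.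
by rewrite divnMDl // divn_small // addn0.
Qed.

Lemma index_modn q : q.2 < n -> index q %% n = q.2.
Proof. by move=> lt_q2; rewrite modnMDl modn_small. Qed.

Lemma unindexK q : q.2 < n -> unindex (index q) = q.
Proof. by move=> lt_q2; rewrite index_divn // index_modn // -surjective_pairing. Qed.

Lemma index_lt q : q.1 < n -> q.2 < n -> index q < n * n.
Proof. by move=> lt_q1 lt_q2; nia. Qed.

Lemma unindex_lt k : k < n * n -> (unindex k).1 < n /\ (unindex k).2 < n.
Proof.
move=> lt_k; have n_gt0 : 0 < n by case: n lt_k.
by rewrite /= ltn_divLR // ltn_mod.
Qed.

Lemma init_table_nth S c k : code_nth (init_table n (CodeSeq.code S) c) k =
  if [&& k < n * n, k %/ n \in S & k %% n \in S] then c else 0.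
Proof. by rewrite code_nth_mkseq !code_mem_code; case: ltnP. Qed.

Lemma init_table_out S c k : n * n <= k -> code_nth (init_table n (CodeSeq.code S) c) k = 0.
Proof. by rewrite init_table_nth ltnNge => ->. Qed.

Lemma fwd_edge_tr p m q :
  fwd_edge n (cd_tr2 (p, m, q)) = CodeSeq.code [:: index p; index q; m.1; m.2].
Proof. by rewrite /fwd_edge /cd_tr2 /cd !code_nth_code. Qed.

Lemma bwd_edge_tr p m q :
  bwd_edge n (cd_tr2 (p, m, q)) = CodeSeq.code [:: index q; index p].
Proof. by rewrite /bwd_edge /cd_tr2 /cd !code_nth_code. Qed.

Definition fwd_invariant k x := exists a b, [/\ x = pair_code a b, dom a, dom b &
  exists2 i, inI2 T i & spath M T A i (a, b) (unindex k)].

Lemma fwd_sound k : code_nth Fw k != 0 -> fwd_invariant k (code_nth Fw k).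
Proof.
rewrite /fwd_table mkseq_code_nth; apply: (@table_sound _ _ _ _ _ _ fwd_invariant).
- by [].
- exact: init_table_out.
- move=> k'; rewrite init_table_nth; case: ifP => [/and3P[lt_k' I1 I2] _|]; last by rewrite eqxx.
  have [lt1 lt2] := unindex_lt lt_k'.
  by exists e, e; split=> //; exists (unindex k'); [apply/andP | apply: sp_nil].
move=> _ x /mapP[_ /mapP[[[p m] q] A_t ->] ->] _.
rewrite fwd_edge_tr !code_nth_code => -[a [b [-> dom_a dom_b [i I_i path_ip]]]].
have [_ lt_p2 _ lt_q2 /andP[dom_m1 dom_m2]] := transitionP A_t.
rewrite fwd_label_pair !code_nth_code /= !restricted_dom //.
exists (op a m.1), (op b m.2); split=> //; try exact: dom_op.
exists i; rewrite // unindexK //.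
by rewrite unindexK // in path_ip; apply: (spath_rcons path_ip A_t).
Qed.

Definition bwd_invariant k (_ : nat) :=
  exists f mf, inF2 T f /\ spath M T A (unindex k) mf f.

Lemma bwd_sound k : code_nth Bw k != 0 -> bwd_invariant k (code_nth Bw k).
Proof.
rewrite /bwd_table mkseq_code_nth; apply: (@table_sound _ _ _ _ _ _ bwd_invariant).
- by [].
- exact: init_table_out.
- move=> k'; rewrite init_table_nth; case: ifP => [/and3P[lt_k' F1 F2] _|]; last by rewrite eqxx.
  have [lt1 lt2] := unindex_lt lt_k'.
  by exists (unindex k'), (e, e); split; [apply/andP | apply: sp_nil].
move=> _ x /mapP[_ /mapP[[[p m] q] A_t ->] ->] _.
rewrite bwd_edge_tr !code_nth_code => -[f [mf [F_f path_qf]]].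
have [_ lt_p2 _ lt_q2 _] := transitionP A_t.
rewrite unindexK // in path_qf; exists f, (op m.1 mf.1, op m.2 mf.2); split=> //.
by rewrite unindexK //; apply: sp_cons A_t path_qf.
Qed.

Let inI2_lt q : inI2 T q -> q.1 < n /\ q.2 < n.
Proof. by case: wfT => /allP tI_lt _ _ /andP[/tI_lt ? /tI_lt ?]. Qed.

Let inF2_lt q : inF2 T q -> q.1 < n /\ q.2 < n.
Proof. by case: wfT => _ /allP tF_lt _ /andP[/tF_lt ? /tF_lt ?]. Qed.

Lemma fwd_init q : inI2 T q -> code_nth Fw (index q) = pair_code e e.
Proof.
move=> I_q; have [lt1 lt2] := inI2_lt I_q; have lt_q := index_lt lt1 lt2.
have init_q :
    code_nth (init_table n (CodeSeq.code (tI T)) (pair_code e e)) (index q) = pair_code e e.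
  by rewrite init_table_nth index_divn // index_modn // lt_q; case/andP: I_q => -> ->.
by rewrite /fwd_table mkseq_code_nth saturate_keep ?init_q //; apply: init_table_out.
Qed.

Lemma bwd_final f : inF2 T f -> code_nth Bw (index f) != 0.
Proof.
move=> F_f; have [lt1 lt2] := inF2_lt F_f; have lt_f := index_lt lt1 lt2.
have init_f : code_nth (init_table n (CodeSeq.code (tF T)) 1) (index f) = 1.
  by rewrite init_table_nth index_divn // index_modn // lt_f; case/andP: F_f => -> ->.
by rewrite /bwd_table mkseq_code_nth saturate_keep ?init_f //; apply: init_table_out.
Qed.

Lemma fwd_closed p m q : (p, m, q) \in A ->
  code_nth Fw (index p) != 0 -> code_nth Fw (index q) != 0.
Proof.
have dst_lt t : t \in [seq fwd_edge n t | t <- es] -> code_nth t 1 < n * n.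
  case/mapP=> _ /mapP[[[p' m'] q'] A_t' ->] ->; rewrite fwd_edge_tr code_nth_code.
  by have [_ _ ? ? _] := transitionP A_t'; apply: index_lt.
have closed := @saturate_closed (fwd_label opR) (fun _ _ => isT) _ _ dst_lt _
  (@init_table_out (tI T) (pair_code e e)).
move=> A_t; rewrite /fwd_table mkseq_code_nth.
move: (allP closed (fwd_edge n (cd_tr2 (p, m, q)))).
by rewrite !map_f // fwd_edge_tr !code_nth_code => /(_ isT)/implyP.
Qed.

Lemma bwd_closed p m q : (p, m, q) \in A ->
  code_nth Bw (index q) != 0 -> code_nth Bw (index p) != 0.
Proof.
have dst_lt t : t \in [seq bwd_edge n t | t <- es] -> code_nth t 1 < n * n.
  case/mapP=> _ /mapP[[[p' m'] q'] A_t' ->] ->; rewrite bwd_edge_tr code_nth_code.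
  by have [? ? _ _ _] := transitionP A_t'; apply: index_lt.
have closed := @saturate_closed (fun _ _ => 1) (fun _ _ => isT) _ _ dst_lt _
  (@init_table_out (tF T) 1).
move=> A_t; rewrite /bwd_table mkseq_code_nth.
move: (allP closed (bwd_edge n (cd_tr2 (p, m, q)))).
by rewrite !map_f // bwd_edge_tr !code_nth_code => /(_ isT)/implyP.
Qed.

Lemma fwd_reach i m q : inI2 T i -> spath M T A i m q -> code_nth Fw (index q) != 0.
Proof.
move=> I_i path_iq; have : code_nth Fw (index i) != 0 by rewrite fwd_init.
by elim: path_iq {I_i} => // p m0 q0 n0 r A_t _ IHpath /(fwd_closed A_t).
Qed.

Lemma bwd_reach q m f : inF2 T f -> spath M T A q m f -> code_nth Bw (index q) != 0.
Proof.
move=> F_f path_qf; elim: path_qf F_f => [r _ _|p m0 q0 n0 r A_t _ IHpath] F_r.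
  exact: bwd_final.
exact: bwd_closed A_t (IHpath F_r).
Qed.

Local Notation rho_code k := (rho_entry Fw Bw k).

Definition rho q := decode_pair (rho_code (index q)).
Definition nu q := decode_pair (nu_entry e ddR etaR (rho_code (index q))).

Lemma rho_code_sound k : rho_code k != 0 -> exists a b,
  [/\ rho_code k = pair_code a b, dom a, dom b & relevant_pair M T A (unindex k) (a, b)].
Proof.
rewrite /rho_entry; case: ifP => [nzB nzF|]; last by rewrite eqxx.
have [f [mf [F_f path_kf]]] := bwd_sound nzB.
have [a [b [-> dom_a dom_b [i I_i path_ik]]]] := fwd_sound nzF.
by exists a, b; split=> //; split; [exists i, f, (a, b), mf | exists i].
Qed.

Lemma rho_code_complete q m : relevant_pair M T A q m -> rho_code (index q) != 0.
Proof.
case=> [[i [f [mi [mf [I_i F_f path_iq path_qf]]]]] _].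
by rewrite /rho_entry (bwd_reach F_f path_qf) (fwd_reach I_i path_iq).
Qed.

Lemma rho_codeK k : cd_opt_pair (decode_pair (rho_code k)) = rho_code k.
Proof.
have [->//|/rho_code_sound[a [b [-> _ _ _]]]] := eqVneq (rho_code k) 0.
by rewrite decode_pair_code.
Qed.

Lemma nu_codeK r : cd_opt_pair (decode_pair (nu_entry e ddR etaR r)) = nu_entry e ddR etaR r.
Proof.
rewrite /nu_entry; case: eqP => // _; case: eqP => _; first by rewrite decode_pair_code.
by case: ifP => // _; rewrite succ_cd_pair decode_pair_code.
Qed.

Lemma rho_code_init q : inI2 T q -> rho_code (index q) != 0 -> rho_code (index q) = pair_code e e.
Proof. by rewrite /rho_entry => I_q; case: ifP => // _ _; apply: fwd_init. Qed.

Lemma valuation_rho_nu : valuation M eta T A rho nu.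
Proof.
move=> q lt_q1 lt_q2; rewrite /rho /nu.
have [zero|nz] := eqVneq (rho_code (index q)) 0.
  rewrite zero; split=> //; split=> // -[m /rho_code_complete].
  by rewrite zero eqxx.
have [a [b [code_ab dom_a dom_b rel_ab]]] := rho_code_sound nz.
rewrite unindexK // in rel_ab; rewrite code_ab decode_pair_code nu_entry_pair /=.
split.
- by split=> // _; exists (a, b).
- move=> _ [<-]; case: ifP => // I_q.
  move: (rho_code_init I_q nz); rewrite code_ab => /(congr1 decode_pair).
  by rewrite !decode_pair_code => -[-> ->].
case: eqP => [_|_]; first exact: decode_pair_code.
rewrite !restricted_dom //; case: (boolP (d a b)) => [dab|ndab] /=.
  rewrite /cd_pair /cd !code_nth_code /= -surjective_pairing.
  by split=> // not_eq; case: not_eq; apply/dP.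
by split=> // eq_ab; case/negP: ndab; apply/dP.
Qed.

Lemma valuation_alg_input :
  valuation_alg e opR ddR etaR (cd_input T A) = cd_valuation n rho nu.
Proof.
rewrite /valuation_alg /cd_input /cd !code_nth_code /valuation_code /cd_valuation /cd /=.
rewrite (allpairs_iota (fun k => CodeSeq.code [:: cd_opt_pair (decode_pair (rho_code k));
  cd_opt_pair (decode_pair (nu_entry e ddR etaR (rho_code k)))])).
by congr CodeSeq.code; apply: eq_map => k; rewrite rho_codeK nu_codeK.
Qed.

End Correctness.

Theorem proposition3 (M : nmonoid) (eta : nat * nat -> nat * nat) :
  effective_mge_monoid M eta ->
  exists alg : prog,
    forall (T : transducer) (A : sqautomaton),
      wf_transducer M T -> squared_output_automaton M T A ->
      exists rho nu : nat * nat -> option (nat * nat),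
        valuation M eta T A rho nu /\
        eval alg [:: cd_input T A] (cd_valuation (nQ T) rho nu).
Proof.
case=> [[monoidM _ _] [_ [[pdom Hdom] [[pop Hop] [[pdd [d [dP Hdd]]] [[peta Heta] _]]]]]].
have dom_e : Mdom M (me M) by case: monoidM.
have Hdom1 : computable 1 (fun xs => bool_nat (Mdom M xs.[0])) by exists pdom => -[|x []].
have [alg Halg] := computable_valuation_alg (me M)
  (computable_restricted dom_e Hdom1 Hop)
  (computable_restricted (h := fun a b => bool_nat (d a b)) dom_e Hdom1 Hdd)
  (computable_restricted (h := fun a b => cd_pair (eta (a, b))) dom_e Hdom1 Heta).
exists alg => T A wfT sqA; exists (rho M T A), (nu M eta d T A); split.
  exact: valuation_rho_nu.
by rewrite -(valuation_alg_input eta d monoidM sqA); apply: Halg.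
Qed.
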